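(* Let $H\in\mathbb{R}^{n\times n}$ be symmetric positive semi-definite and let $a_1,\dots,a_n\in\mathbb{R}^n$. Define $\Sigma_0=0\in\mathbb{R}^{n\times n}$ and, for $k=1,\dots,n$, $$\Sigma_k=(I-e_ka_k^T)\Sigma_{k-1}(I-a_ke_k^T)+e_ke_k^T,$$ and set $\ell(a_1,\dots,a_n)=\operatorname{tr}(H\Sigma_n)$. Let $H=LDL^T$ with $L$ unit upper triangular and $D$ nonnegative diagonal. Then $\ell$ attains its global minimum over all $(a_1,\dots,a_n)$ when $a_k=Le_k$ (the $k$-th column of $L$) for every $k$, and the minimum value is $\operatorname{tr}(D)$.
   Context: $e_k$ denotes the $k$-th standard basis vector of $\mathbb{R}^n$. A unit upper triangular matrix is an upper triangular matrix with all diagonal entries equal to $1$. *)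

From mathcomp Require Import all_boot all_order all_algebra.
Set Implicit Arguments. Unset Strict Implicit. Unset Printing Implicit Defensive.
Import Order.TTheory GRing.Theory Num.Theory.
Local Open Scope ring_scope.

(* standard basis column vector e_k of R^n (k zero-indexed) *)
Definition ebasis (R : ringType) (n : nat) (k : 'I_n) : 'cV[R]_n := delta_mx k 0.

Definition sigma_step (R : comRingType) (n : nat) (a : 'I_n -> 'cV[R]_n)
  (S : 'M[R]_n) (k : 'I_n) : 'M[R]_n :=
  (1%:M - ebasis R k *m (a k)^T) *m S *m (1%:M - a k *m (ebasis R k)^T)
  + ebasis R k *m (ebasis R k)^T.

Definition sigma_n (R : comRingType) (n : nat) (a : 'I_n -> 'cV[R]_n) : 'M[R]_n :=
  foldl (sigma_step a) 0 (enum 'I_n).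

Definition loss (R : comRingType) (n : nat) (H : 'M[R]_n) (a : 'I_n -> 'cV[R]_n) : R :=
  \tr (H *m sigma_n a).

Definition psd (R : numDomainType) (n : nat) (H : 'M[R]_n) : Prop :=
  H^T = H /\ forall x : 'cV[R]_n, 0 <= (x^T *m H *m x) 0 0.

Definition unit_upper_triangular (R : ringType) (n : nat) (L : 'M[R]_n) : Prop :=
  (forall i j : 'I_n, (j < i)%N -> L i j = 0) /\ (forall i : 'I_n, L i i = 1).

Definition nonneg_diagonal (R : numDomainType) (n : nat) (D : 'M[R]_n) : Prop :=
  is_diag_mx D /\ (forall i : 'I_n, 0 <= D i i).

From mathcomp Require Import all_boot all_order all_algebra.
Import Order.TTheory GRing.Theory Num.Theory.
Local Open Scope ring_scope.
Set Implicit Arguments. Unset Strict Implicit.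

(* Write q_S(x) = x^T S x for the quadratic form of a matrix S.
   Since the step matrix I - a_k e_k^T is the transpose of I - e_k a_k^T,
   one step of the recursion acts on quadratic forms as
        q_{Sigma_k}(x) = q_{Sigma_{k-1}}(x - x_k a_k) + x_k^2.
   Consequences: every Sigma_k is positive semi-definite, and a vector x with
   x_k = 0 for all steps k of a block of steps is left invariant by the block.
   With H = L D L^T we have tr(H Sigma_n) = sum_i D_ii q_{Sigma_n}(l_i), l_i
   the i-th column of L.  As L is unit upper triangular, (l_i)_i = 1 and
   (l_i)_k = 0 for k > i, so only steps 1..i matter and
        q_{Sigma_n}(l_i) = q_{Sigma_{i-1}}(l_i - a_i) + 1 >= 1,
   with equality when a_i = l_i.  Weighting by D_ii >= 0 and summing gives
   loss >= tr D, with equality at a_k = l_k. *)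

Definition qform (R : nzRingType) (n : nat) (S : 'M[R]_n) (x : 'cV[R]_n) : R :=
  (x^T *m S *m x) 0 0.

Lemma ebasisT_mul (R : comNzRingType) (n : nat) (k : 'I_n) (x : 'cV[R]_n) :
  (ebasis R k)^T *m x = (x k 0)%:M.
Proof.
apply/matrixP => i j; rewrite !ord1 /ebasis trmx_delta -rowE !mxE /=.
by rewrite mulr1n.
Qed.

Lemma qform0 (R : comNzRingType) (n : nat) (S : 'M[R]_n) : qform S 0 = 0.
Proof. by rewrite /qform mulmx0 mxE. Qed.

Section Steps.
Variables (R : comNzRingType) (n : nat) (a : 'I_n -> 'cV[R]_n).

Lemma qform_step (S : 'M[R]_n) (k : 'I_n) (x : 'cV[R]_n) :
  qform (sigma_step a S k) x = qform S (x - x k 0 *: a k) + x k 0 ^+ 2.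
Proof.
set P := 1%:M - a k *m (ebasis R k)^T.
have Px : P *m x = x - x k 0 *: a k.
  by rewrite mulmxBl mul1mx -mulmxA ebasisT_mul mul_mx_scalar.
have PT : P^T = 1%:M - ebasis R k *m (a k)^T.
  by rewrite raddfB /= trmx1 trmx_mul trmxK.
have conj : x^T *m (P^T *m S *m P) *m x = (P *m x)^T *m S *m (P *m x).
  by rewrite trmx_mul !mulmxA.
have proj : (x^T *m (ebasis R k *m (ebasis R k)^T) *m x) 0 0 = x k 0 ^+ 2.
  rewrite -!mulmxA ebasisT_mul mulmxA -[x^T *m _]trmxK trmx_mul trmxK.
  by rewrite ebasisT_mul mul_mx_scalar !mxE /= mulr1n expr2.
by rewrite /qform /sigma_step -PT mulmxDr mulmxDl mxE conj Px proj.
Qed.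

Lemma qform_foldl_invariant (S : 'M[R]_n) (s : seq 'I_n) (x : 'cV[R]_n) :
  (forall k, k \in s -> x k 0 = 0) ->
  qform (foldl (sigma_step a) S s) x = qform S x.
Proof.
elim: s S => [|k s IH] S x_s0 //=.
rewrite IH ?qform_step => [|j js]; last by apply: x_s0; rewrite inE js orbT.
have -> : x k 0 = 0 by apply: x_s0; rewrite inE eqxx.
by rewrite scale0r subr0 expr0n addr0.
Qed.

End Steps.

Lemma qform_foldl_ge0 (R : realDomainType) (n : nat) (a : 'I_n -> 'cV[R]_n)
    (S : 'M[R]_n) (s : seq 'I_n) :
  (forall x, 0 <= qform S x) ->
  forall x, 0 <= qform (foldl (sigma_step a) S s) x.
Proof.
elim: s S => [|k s IH] S S_ge0 //=; apply: IH => x.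
by rewrite qform_step addr_ge0 ?sqr_ge0.
Qed.

Lemma enum_ord_split (n : nat) (i : 'I_n) : exists p1 p2,
  enum 'I_n = p1 ++ i :: p2 /\ forall k, k \in p2 -> (i < k)%N.
Proof.
have : sorted (relpre val ltn) (enum 'I_n).
  by rewrite -sorted_map val_enum_ord iota_ltn_sorted.
have : i \in enum 'I_n by rewrite mem_enum.
case/splitPr => p1 p2 sorted_enum; exists p1, p2; split => //.
move: sorted_enum; rewrite sorted_cat_cons => /andP[_ /(order_path_min _)] path_min.
have /allP gt_i : all (relpre val ltn i) p2.
  by apply: path_min => y x z /=; exact: ltn_trans.
exact: gt_i.
Qed.

Lemma qform_sigma_n (R : realDomainType) (n : nat) (a : 'I_n -> 'cV[R]_n)
    (i : 'I_n) (x : 'cV[R]_n) :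
  x i 0 = 1 -> (forall k : 'I_n, (i < k)%N -> x k 0 = 0) ->
  exists2 S : 'M[R]_n, (forall y, 0 <= qform S y) &
    qform (sigma_n a) x = qform S (x - a i) + 1.
Proof.
move=> xi1 x_gt0; have [p1 [p2 [enum_eq gt_i]]] := enum_ord_split i.
exists (foldl (sigma_step a) 0 p1).
  by apply: qform_foldl_ge0 => y; rewrite /qform mulmx0 mul0mx mxE.
rewrite /sigma_n enum_eq foldl_cat /= qform_foldl_invariant => [|k /gt_i]; last exact: x_gt0.
by rewrite qform_step xi1 scale1r expr1n.
Qed.

Lemma trace_LDLT (R : comNzRingType) (n : nat) (L D S : 'M[R]_n) :
  is_diag_mx D ->
  \tr (L *m D *m L^T *m S) = \sum_i D i i * qform S (col i L).
Proof.
move=> /is_diag_mxP D_diag.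
rewrite -!mulmxA mxtrace_mulC !mulmxA /mxtrace; apply: eq_bigr => i _.
rewrite -!mulmxA mxE (bigD1 i) //= big1 ?addr0 => [|j ji]; last first.
  by rewrite D_diag ?mul0r // eq_sym.
congr (_ * _); rewrite /qform !mulmxA !mxE; apply: eq_bigr => j _.
by rewrite !mxE; congr (_ * _); apply: eq_bigr => k _; rewrite !mxE.
Qed.

Theorem mainTheorem2 (R : realFieldType) (n : nat) (H L D : 'M[R]_n) :
  psd H -> unit_upper_triangular L -> nonneg_diagonal D ->
  H = L *m D *m L^T ->
  (forall a : 'I_n -> 'cV[R]_n, loss H (fun k => col k L) <= loss H a) /\
  loss H (fun k => col k L) = \tr D.
Proof.
move=> _ [L_upper L_diag] [D_diag D_ge0] ->.
have col_1 (i : 'I_n) : col i L i 0 = 1 by rewrite mxE L_diag.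
have col_0 (i k : 'I_n) : (i < k)%N -> col i L k 0 = 0 by rewrite mxE; apply: L_upper.
have opt : loss (L *m D *m L^T) (fun k => col k L) = \tr D.
  rewrite /loss trace_LDLT // /mxtrace; apply: eq_bigr => i _.
  have [S _ ->] := qform_sigma_n (fun k => col k L) (col_1 i) (col_0 i).
  by rewrite subrr qform0 add0r mulr1.
split=> // a; rewrite opt /loss trace_LDLT // /mxtrace; apply: ler_sum => i _.
have [S S_ge0 ->] := qform_sigma_n a (col_1 i) (col_0 i).
by rewrite ler_peMr // lerDr.
Qed.
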